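(* Let $(\mathcal{X},\boxtimes,I)$ and $(\mathcal{L},\otimes,R)$ be closed symmetric monoidal categories and $F\dashv G:\mathcal{L}\to\mathcal{X}$ (with $F:\mathcal{X}\to\mathcal{L}$) a symmetric monoidal adjunction, with $\mathcal{L}$ locally small and finitely well-complete, and suppose that for every object $X$ of $\mathcal{X}$ the cotensor $[X,R]$ in $G_*\underline{\mathcal{L}}$ is reflexive. Then for each object $X$ of $\mathcal{X}$, the morphism $\partial_{FX}:FX\to HFX=(FX)^{**}$ in $\mathcal{L}$ is inverted by $H:\mathcal{L}\to\mathcal{L}$, i.e. $H\partial_{FX}$ is an isomorphism.
   Context: $\underline{\mathcal{L}}(-,-)$ denotes the internal hom of $\mathcal{L}$ and $E^*:=\underline{\mathcal{L}}(E,R)$. $H=(-)^{**}$ is the underlying functor of the double-dualization monad, i.e. the monad induced by the adjunction $\underline{\mathcal{L}}(-,R)\dashv\underline{\mathcal{L}}(-,R):\mathcal{L}^{\mathrm{op}}\to\mathcal{L}$, and $\partial_E:E\to E^{**}$ is its unit (the transpose of evaluation $E\otimes\underline{\mathcal{L}}(E,R)\to R$ composed with the symmetry). An object $E$ is reflexive if $\partial_E$ is an isomorphism. $G_*\underline{\mathcal{L}}$ is the $\mathcal{X}$-category with objects those of $\mathcal{L}$ and homs $G\underline{\mathcal{L}}(E_1,E_2)$; it is cotensored, a cotensor $[X,E]$ being given by $\underline{\mathcal{L}}(FX,E)$, so $[X,R]\cong(FX)^*$. Finitely well-complete: $\mathcal{L}$ has finite limits and every (class-indexed) family of strong monomorphisms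 with common codomain has a fiber product. *)

Set Implicit Arguments.
Unset Strict Implicit.

(* Hom-types are (small) types: local smallness is built in. *)
Record Category := {
  Ob :> Type;
  Hom : Ob -> Ob -> Type;
  idm : forall a : Ob, Hom a a;
  comp : forall a b c : Ob, Hom b c -> Hom a b -> Hom a c;
  comp_id_l : forall a b (f : Hom a b), comp (idm b) f = f;
  comp_id_r : forall a b (f : Hom a b), comp f (idm a) = f;
  comp_assoc : forall a b c d (f : Hom a b) (g : Hom b c) (h : Hom c d),
      comp h (comp g f) = comp (comp h g) f
}.
Arguments Hom {c0} _ _ : rename.
Arguments idm {c0} _ : rename.
Arguments comp {c0 a b c} _ _ : rename.

Notation "g \o f" := (comp g f) (at level 40, left associativity).

Definition is_iso {C : Category} {a b : C} (f : Hom a b) : Prop :=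
  exists g : Hom b a, g \o f = idm a /\ f \o g = idm b.

Record Functor (C D : Category) := {
  fobj :> C -> D;
  fmap : forall a b : C, Hom a b -> Hom (fobj a) (fobj b);
  fmap_id : forall a, fmap (idm a) = idm (fobj a);
  fmap_comp : forall a b c (f : Hom a b) (g : Hom b c),
      fmap (g \o f) = fmap g \o fmap f
}.
Arguments fmap {C D} F {a b} f : rename.

Record SymMonClosed (C : Category) := {
  tens : C -> C -> C;
  tensm : forall a b a' b' : C, Hom a a' -> Hom b b' -> Hom (tens a b) (tens a' b');
  tensm_id : forall a b, tensm (idm a) (idm b) = idm (tens a b);
  tensm_comp : forall a b a' b' a'' b'' (f : Hom a a') (g : Hom b b')
      (f' : Hom a' a'') (g' : Hom b' b''),
      tensm (f' \o f) (g' \o g) = tensm f' g' \o tensm f g;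
  unit : C;
  assoc : forall a b c : C, Hom (tens (tens a b) c) (tens a (tens b c));
  assoc_inv : forall a b c : C, Hom (tens a (tens b c)) (tens (tens a b) c);
  assoc_iso1 : forall a b c, assoc_inv a b c \o assoc a b c = idm _;
  assoc_iso2 : forall a b c, assoc a b c \o assoc_inv a b c = idm _;
  assoc_nat : forall a b c a' b' c' (f : Hom a a') (g : Hom b b') (h : Hom c c'),
      assoc a' b' c' \o tensm (tensm f g) h = tensm f (tensm g h) \o assoc a b c;
  lunit : forall a : C, Hom (tens unit a) a;
  lunit_inv : forall a : C, Hom a (tens unit a);
  lunit_iso1 : forall a, lunit_inv a \o lunit a = idm _;
  lunit_iso2 : forall a, lunit a \o lunit_inv a = idm _;
  lunit_nat : forall a a' (f : Hom a a'), lunit a' \o tensm (idm unit) f = f \o lunit a;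
  runit : forall a : C, Hom (tens a unit) a;
  runit_inv : forall a : C, Hom a (tens a unit);
  runit_iso1 : forall a, runit_inv a \o runit a = idm _;
  runit_iso2 : forall a, runit a \o runit_inv a = idm _;
  runit_nat : forall a a' (f : Hom a a'), runit a' \o tensm f (idm unit) = f \o runit a;
  pentagon : forall a b c d : C,
      assoc a b (tens c d) \o assoc (tens a b) c d
      = tensm (idm a) (assoc b c d) \o assoc a (tens b c) d
        \o tensm (assoc a b c) (idm d);
  triangle : forall a b : C,
      tensm (idm a) (lunit b) \o assoc a unit b = tensm (runit a) (idm b);
  sym : forall a b : C, Hom (tens a b) (tens b a);
  sym_invol : forall a b, sym b a \o sym a b = idm _;
  sym_nat : forall a b a' b' (f : Hom a a') (g : Hom b b'),
      sym a' b' \o tensm f g = tensm g f \o sym a b;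
  hexagon : forall a b c : C,
      assoc b c a \o sym a (tens b c) \o assoc a b c
      = tensm (idm b) (sym a c) \o assoc b a c \o tensm (sym a b) (idm c);
  ihom : C -> C -> C;
  ev : forall a b : C, Hom (tens (ihom a b) a) b;
  curry : forall a b c : C, Hom (tens c a) b -> Hom c (ihom a b);
  ev_curry : forall a b c (f : Hom (tens c a) b),
      ev a b \o tensm (curry f) (idm a) = f;
  curry_unique : forall a b c (f : Hom (tens c a) b) (g : Hom c (ihom a b)),
      ev a b \o tensm g (idm a) = f -> g = curry f
}.
Arguments tens {C} M a b : rename.
Arguments tensm {C} M {a b a' b'} f g : rename.
Arguments unit {C} M : rename.
Arguments assoc {C} M a b c : rename.
Arguments lunit {C} M a : rename.
Arguments runit {C} M a : rename.
Arguments sym {C} M a b : rename.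
Arguments ihom {C} M a b : rename.
Arguments ev {C} M a b : rename.
Arguments curry {C} M {a b c} f : rename.

Record LaxSymMon {C D : Category} (MC : SymMonClosed C) (MD : SymMonClosed D)
    (F : Functor C D) := {
  phi0 : Hom (unit MD) (F (unit MC));
  phi2 : forall a b : C, Hom (tens MD (F a) (F b)) (F (tens MC a b));
  phi2_nat : forall a b a' b' (f : Hom a a') (g : Hom b b'),
      fmap F (tensm MC f g) \o phi2 a b = phi2 a' b' \o tensm MD (fmap F f) (fmap F g);
  phi_assoc : forall a b c,
      fmap F (assoc MC a b c) \o phi2 (tens MC a b) c \o tensm MD (phi2 a b) (idm (F c))
      = phi2 a (tens MC b c) \o tensm MD (idm (F a)) (phi2 b c) \o assoc MD (F a) (F b) (F c);
  phi_lunit : forall a,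
      fmap F (lunit MC a) \o phi2 (unit MC) a \o tensm MD phi0 (idm (F a)) = lunit MD (F a);
  phi_runit : forall a,
      fmap F (runit MC a) \o phi2 a (unit MC) \o tensm MD (idm (F a)) phi0 = runit MD (F a);
  phi_sym : forall a b,
      fmap F (sym MC a b) \o phi2 a b = phi2 b a \o sym MD (F a) (F b)
}.
Arguments phi0 {C D MC MD F} l : rename.
Arguments phi2 {C D MC MD F} l a b : rename.

Record Adjunction {X L : Category} (F : Functor X L) (G : Functor L X) := {
  adj_unit : forall x : X, Hom x (G (F x));
  adj_counit : forall e : L, Hom (F (G e)) e;
  adj_unit_nat : forall x y (f : Hom x y),
      adj_unit y \o f = fmap G (fmap F f) \o adj_unit x;
  adj_counit_nat : forall e e' (f : Hom e e'),
      adj_counit e' \o fmap F (fmap G f) = f \o adj_counit e;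
  adj_tri1 : forall x, adj_counit (F x) \o fmap F (adj_unit x) = idm (F x);
  adj_tri2 : forall e, fmap G (adj_counit e) \o adj_unit (G e) = idm (G e)
}.
Arguments adj_unit {X L F G} A x : rename.
Arguments adj_counit {X L F G} A e : rename.

(* An adjunction between lax symmetric monoidal functors whose unit and counit
   are monoidal natural transformations (w.r.t. the composite lax structures). *)
Definition sym_monoidal_adjunction {X L : Category}
    (MX : SymMonClosed X) (ML : SymMonClosed L)
    (F : Functor X L) (G : Functor L X)
    (FM : LaxSymMon MX ML F) (GM : LaxSymMon ML MX G) (A : Adjunction F G) : Prop :=
  (forall x y : X,
      adj_unit A (tens MX x y)
      = fmap G (phi2 FM x y) \o phi2 GM (F x) (F y)
        \o tensm MX (adj_unit A x) (adj_unit A y))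
  /\ adj_unit A (unit MX) = fmap G (phi0 FM) \o phi0 GM
  /\ (forall e e' : L,
      adj_counit A (tens ML e e') \o fmap F (phi2 GM e e') \o phi2 FM (G e) (G e')
      = tensm ML (adj_counit A e) (adj_counit A e'))
  /\ adj_counit A (unit ML) \o fmap F (phi0 GM) \o phi0 FM = idm (unit ML).

Definition is_mono {C : Category} {a b : C} (m : Hom a b) : Prop :=
  forall z (g h : Hom z a), m \o g = m \o h -> g = h.

Definition is_epi {C : Category} {a b : C} (e : Hom a b) : Prop :=
  forall z (g h : Hom b z), g \o e = h \o e -> g = h.

Definition is_strong_mono {C : Category} {a b : C} (m : Hom a b) : Prop :=
  is_mono m /\
  forall (c d : C) (e : Hom c d) (u : Hom c a) (v : Hom d b),
    is_epi e -> m \o u = v \o e -> exists t : Hom d a, t \o e = u /\ m \o t = v.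

Definition has_terminal (C : Category) : Prop :=
  exists t : C, forall a : C, exists f : Hom a t, forall g : Hom a t, g = f.

Definition has_pullbacks (C : Category) : Prop :=
  forall (a b c : C) (f : Hom a c) (g : Hom b c),
  exists (p : C) (pa : Hom p a) (pb : Hom p b), f \o pa = g \o pb /\
    forall (z : C) (za : Hom z a) (zb : Hom z b), f \o za = g \o zb ->
      exists u : Hom z p, (pa \o u = za /\ pb \o u = zb) /\
        forall u' : Hom z p, pa \o u' = za -> pb \o u' = zb -> u' = u.

Definition has_finite_limits (C : Category) : Prop :=
  has_terminal C /\ has_pullbacks C.

Definition has_strong_mono_fiber_products (C : Category) : Prop :=
  forall (I : Type) (b : C) (a : I -> C) (m : forall i, Hom (a i) b),
    (forall i, is_strong_mono (m i)) ->
    exists (p : C) (pb : Hom p b) (pi : forall i, Hom p (a i)),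
      (forall i, m i \o pi i = pb) /\
      forall (z : C) (zb : Hom z b) (zi : forall i, Hom z (a i)),
        (forall i, m i \o zi i = zb) ->
        exists u : Hom z p, (pb \o u = zb /\ forall i, pi i \o u = zi i) /\
          forall u' : Hom z p, pb \o u' = zb -> (forall i, pi i \o u' = zi i) -> u' = u.

Definition finitely_well_complete (C : Category) : Prop :=
  has_finite_limits C /\ has_strong_mono_fiber_products C.

Section Duals.
Context {L : Category} (ML : SymMonClosed L).

Definition dual (E : L) : L := ihom ML E (unit ML).

Definition dualm {E1 E2 : L} (f : Hom E1 E2) : Hom (dual E2) (dual E1) :=
  curry ML (ev ML E2 (unit ML) \o tensm ML (idm (dual E2)) f).

Definition Hm {E1 E2 : L} (f : Hom E1 E2) : Hom (dual (dual E1)) (dual (dual E2)) :=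
  dualm (dualm f).

Definition partial (E : L) : Hom E (dual (dual E)) :=
  curry ML (ev ML E (unit ML) \o sym ML E (dual E)).

Definition reflexive (E : L) : Prop := is_iso (partial E).
End Duals.

(* The cotensor [X, R] in the X-category G_* L, given (as in the paper) by
   the internal hom L(FX, R) = (FX)^*. *)
Definition cotensor_R {X L : Category} (ML : SymMonClosed L) (F : Functor X L)
  (x : X) : L := dual ML (F x).

(* For any object E of a closed symmetric monoidal category, the unit maps
   satisfy the triangle identity  dual(∂_E) ∘ ∂_(dual E) = id.  If dual E is
   reflexive, ∂_(dual E) is invertible, so its left inverse dual(∂_E) is its
   two-sided inverse; dualizing once more, H ∂_E = dual(dual(∂_E)) is
   invertible. Apply this to E = FX, whose dual is the cotensor [X, R]. *)


Lemma is_iso_left_inverse {C : Category} {a b : C} {f : Hom a b} {g : Hom b a} :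
  is_iso f -> g \o f = idm a -> is_iso g.
Proof.
  intros [h [_ fh]] gf.
  assert (gh : g = h).
  { rewrite <- (comp_id_r g), <- fh, comp_assoc, gf, comp_id_l. reflexivity. }
  exists f; split; [rewrite gh; exact fh | exact gf].
Qed.

Section ClosedSymmetricMonoidal.
Context {C : Category} (M : SymMonClosed C).

Lemma tensm_compl a b c d (f : Hom a b) (f' : Hom b c) :
  tensm M (f' \o f) (idm d) = tensm M f' (idm d) \o tensm M f (idm d).
Proof. rewrite <- tensm_comp, comp_id_l. reflexivity. Qed.

Lemma tensm_compr a b c d (f : Hom a b) (f' : Hom b c) :
  tensm M (idm d) (f' \o f) = tensm M (idm d) f' \o tensm M (idm d) f.
Proof. rewrite <- tensm_comp, comp_id_l. reflexivity. Qed.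

Lemma tensm_lr a b a' b' (f : Hom a a') (g : Hom b b') :
  tensm M f g = tensm M f (idm b') \o tensm M (idm a) g.
Proof. rewrite <- tensm_comp, comp_id_l, comp_id_r. reflexivity. Qed.

Lemma tensm_rl a b a' b' (f : Hom a a') (g : Hom b b') :
  tensm M f g = tensm M (idm a') g \o tensm M f (idm b).
Proof. rewrite <- tensm_comp, comp_id_l, comp_id_r. reflexivity. Qed.

Lemma curry_ev a b : curry M (ev M a b) = idm _.
Proof. symmetry. apply curry_unique. rewrite tensm_id, comp_id_r. reflexivity. Qed.

Lemma dualm_id E : dualm M (idm E) = idm _.
Proof. unfold dualm. rewrite tensm_id, comp_id_r. apply curry_ev. Qed.

Lemma ev_dualm E1 E2 (f : Hom E1 E2) :
  ev M E1 (unit M) \o tensm M (dualm M f) (idm E1)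
  = ev M E2 (unit M) \o tensm M (idm _) f.
Proof. apply ev_curry. Qed.

Lemma dualm_comp E1 E2 E3 (f : Hom E1 E2) (g : Hom E2 E3) :
  dualm M (g \o f) = dualm M f \o dualm M g.
Proof.
  symmetry. apply curry_unique.
  rewrite tensm_compl, comp_assoc, ev_dualm.
  rewrite <- comp_assoc, <- tensm_rl, tensm_lr, comp_assoc, ev_dualm.
  rewrite <- comp_assoc, <- tensm_compr. reflexivity.
Qed.

Lemma dualm_iso E1 E2 (f : Hom E1 E2) : is_iso f -> is_iso (dualm M f).
Proof.
  intros [g [gf fg]]. exists (dualm M g).
  split; rewrite <- dualm_comp; [rewrite fg | rewrite gf]; apply dualm_id.
Qed.

Lemma ev_partial E :
  ev M (dual M E) (unit M) \o tensm M (partial M E) (idm (dual M E))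
  = ev M E (unit M) \o sym M E (dual M E).
Proof. apply ev_curry. Qed.

Lemma dualm_partial_partial_dual E :
  dualm M (partial M E) \o partial M (dual M E) = idm _.
Proof.
  transitivity (curry M (ev M E (unit M))); [apply curry_unique | apply curry_ev].
  rewrite tensm_compl, comp_assoc, ev_dualm.
  rewrite <- comp_assoc, <- tensm_rl, tensm_lr, comp_assoc, ev_partial.
  rewrite <- comp_assoc, sym_nat, comp_assoc, ev_partial.
  rewrite <- comp_assoc, sym_invol, comp_id_r. reflexivity.
Qed.

Lemma Hm_partial_iso {E} : reflexive M (dual M E) -> is_iso (Hm M (partial M E)).
Proof.
  intros refl_dual. apply dualm_iso.
  exact (is_iso_left_inverse refl_dual (dualm_partial_partial_dual E)).
Qed.

End ClosedSymmetricMonoidal.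

Theorem lemma13p3 (X L : Category) (MX : SymMonClosed X) (ML : SymMonClosed L)
    (F : Functor X L) (G : Functor L X)
    (FM : LaxSymMon MX ML F) (GM : LaxSymMon ML MX G) (A : Adjunction F G)
    (hadj : sym_monoidal_adjunction FM GM A)
    (hL : finitely_well_complete L)
    (hrefl : forall x : X, reflexive ML (cotensor_R ML F x)) :
  forall x : X, is_iso (Hm ML (partial ML (F x))).
Proof. intros x. exact (Hm_partial_iso ML (hrefl x)). Qed.
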